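(* In the Setting below, $N_{\mathcal M}$ is a subalgebra of $\mathcal M$ (i.e. $N_{\mathcal M}N_{\mathcal M}\subseteq N_{\mathcal M}$) and $N_{\mathcal M}J_{\mathcal M}\subseteq J_{\mathcal M}$.
   Context: Setting. Let $\mathbb F$ be a field of characteristic different from $2$ and $3$. A Malcev algebra is an anticommutative algebra $\mathcal M$ over $\mathbb F$ satisfying $(xz)(yt)=((xy)z)t+((yz)t)x+((zt)x)y+((tx)y)z$. Products are left-normed: $xyz=(xy)z$, $xyzt=((xy)z)t$. Put $J(x,y,z)=xyz+yzx+zxy$ (the Jacobian), $\{x,y,z\}=xyz-xzy+2x(yz)$, and $h(y,z,t,x,u)=\{yz,t,u\}x+\{yz,t,x\}u+\{yx,z,u\}t+\{yu,z,x\}t$. The variety $\mathcal H$ consists of the Malcev algebras satisfying $h(y,z,t,x,u)=0$ identically. The centroid $\Gamma(\mathcal M)$ is the set of linear maps $\alpha$ of $\mathcal M$ (written on the right) with $(xy)\alpha=x(y\alpha)=(x\alpha)y$ for all $x,y$. Put $p(x,y,z,t)=-\{zt,x,y\}-\{yt,z,x\}+\{xt,y,z\}$ and define the operator $\alpha(y,z,t)$ by $x\,\alpha(y,z,t)=p(x,y,z,t)$; for $\mathcal M\in\mathcal H$ these operators lie in $\Gamma(\mathcal M)$. Let $L=\mathfrak{sl}_2(\mathbb F)$ with basis $E,H,F$ and products $EH=E$, $FH=-F$, $EF=\tfrac12 H$. Standing assumption: $\mathcal M\in\mathcal H$ contains $L$ as a subalgebra and $mL\neq 0$ for every $0\neq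 m\in\mathcal M$. Define $N_{\mathcal M}=\{m\in\mathcal M: J(m,a,b)=0\ \forall a,b\in L\}$ and $J_{\mathcal M}=\{m\in\mathcal M:\{m,a,b\}=0\ \forall a,b\in L\}$. Known facts (from prior work): $\mathcal M=N_{\mathcal M}\oplus J_{\mathcal M}$; $J_{\mathcal M}$ is a direct sum of $L$-submodules $V_{2i}$, each with a basis $\{u_i,v_i\}$ satisfying $u_iH=u_i$, $v_iH=-v_i$, $u_iE=v_i$, $u_iF=0$, $v_iE=0$, $v_iF=-u_i$; and, letting $U$ be the linear span of the operators $\alpha(m,a,b)$ ($m\in\mathcal M$, $a,b\in L$), $U\subseteq\Gamma(\mathcal M)$ and $N_{\mathcal M}=\sum_{\alpha\in U}L\alpha$. *)

From Stdlib Require List.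
From mathcomp Require Import all_boot all_order all_algebra.
Set Implicit Arguments. Unset Strict Implicit. Unset Printing Implicit Defensive.
Import GRing.Theory.
Local Open Scope ring_scope.

(* An algebra over the field K: an K-vector space M with a product mul.
   Products are left-normed as in the paper. *)
Section MalcevDefs.
Variables (K : fieldType) (M : lmodType K) (mul : M -> M -> M).
Local Notation "x ** y" := (mul x y) (at level 40, left associativity).

Definition bilinear_prod : Prop :=
  (forall (c : K) x y z, (c *: x + y) ** z = c *: (x ** z) + y ** z) /\
  (forall (c : K) x y z, z ** (c *: x + y) = c *: (z ** x) + z ** y).

Definition anticommutative : Prop := forall x y, x ** y = - (y ** x).

Definition malcev_identity : Prop := forall x y z t,
  (x ** z) ** (y ** t) =
  ((x ** y) ** z) ** t + ((y ** z) ** t) ** x + ((z ** t) ** x) ** y + ((t ** x) ** y) ** z.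

Definition jacobian x y z := (x ** y) ** z + (y ** z) ** x + (z ** x) ** y.

Definition brace x y z := (x ** y) ** z - (x ** z) ** y + (x ** (y ** z)) *+ 2.

Definition hpoly y z t x u :=
  brace (y ** z) t u ** x + brace (y ** z) t x ** u
  + brace (y ** x) z u ** t + brace (y ** u) z x ** t.

Definition in_H_variety : Prop := forall y z t x u, hpoly y z t x u = 0.

(* p(x,y,z,t) = -{zt,x,y} - {yt,z,x} + {xt,y,z};  x alpha(y,z,t) = p(x,y,z,t) *)
Definition ppoly x y z t :=
  - brace (z ** t) x y - brace (y ** t) z x + brace (x ** t) y z.

Definition alpha_op y z t : M -> M := fun x => ppoly x y z t.

Definition in_centroid (a : M -> M) : Prop :=
  (forall (c : K) x y, a (c *: x + y) = c *: a x + a y) /\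
  (forall x y, a (x ** y) = x ** (a y) /\ a (x ** y) = (a x) ** y).

Variables (E H F : M).

Definition inL (a : M) : Prop := exists x y z : K, a = x *: E + y *: H + z *: F.

Definition is_sl2_copy : Prop :=
  E ** H = E /\ F ** H = - F /\ E ** F = 2%:R^-1 *: H /\
  (forall x y z : K, x *: E + y *: H + z *: F = 0 -> [/\ x = 0, y = 0 & z = 0]).

Definition NM (m : M) : Prop := forall a b, inL a -> inL b -> jacobian m a b = 0.
Definition JM (m : M) : Prop := forall a b, inL a -> inL b -> brace m a b = 0.

Definition inU (al : M -> M) : Prop :=
  exists s : seq (K * (M * M * M)),
    (forall q, List.In q s -> inL q.2.1.2 /\ inL q.2.2) /\
    forall x, al x = \sum_(q <- s) q.1 *: alpha_op q.2.1.1 q.2.1.2 q.2.2 x.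

Definition in_sum_L_U (n : M) : Prop :=
  exists s : seq ((M -> M) * M),
    (forall q, List.In q s -> inU q.1 /\ inL q.2) /\
    n = \sum_(q <- s) q.1 q.2.

(* u,v form a basis-type pair of a module V_{2i} as in the paper *)
Definition V2_pair (u v : M) : Prop :=
  u ** H = u /\ v ** H = - v /\ u ** E = v /\ u ** F = 0 /\ v ** E = 0 /\ v ** F = - u.

End MalcevDefs.

From Stdlib Require List.
From mathcomp Require Import all_boot all_order all_algebra.
Set Implicit Arguments. Unset Strict Implicit. Unset Printing Implicit Defensive.
Import GRing.Theory.
Local Open Scope ring_scope.

(* By the known description N_M = Σ_{α ∈ U} Lα, with U inside the centroid Γ,
   every element of N_M is a sum of terms α(a) with α ∈ Γ and a ∈ L.  Since a
   centroid element α is linear and commutes with products, it commutes with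
   the Jacobian and with the brace {·,·,·} in their first argument, so N_M and
   J_M are stable under Γ.  Hence it suffices to treat the generators:
   - α(a)·β(b) = α(β(ab)), and ab ∈ L ⊆ N_M because L ≅ sl_2 is a Lie algebra
     (the Jacobian is trilinear and alternating, and J(E,H,F) = 0);
   - α(a)·y = α(ay) for y ∈ J_M, and ay ∈ J_M because J_M is a sum of
     L-modules V_{2i} whose L-action is given by the multiplication table. *)

Definition lin_closed (K : fieldType) (M : lmodType K) (P : M -> Prop) : Prop :=
  [/\ P 0, forall x y, P x -> P y -> P (x + y) & forall (c : K) x, P x -> P (c *: x)].

Section LinearMaps.
Variables (K : fieldType) (U V : lmodType K) (f : U -> V).
Hypothesis f_lin : linear f.

Lemma lin0 : f 0 = 0.
Proof. by have := f_lin (-1) 0 0; rewrite scaler0 addr0 scaleN1r addNr. Qed.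

Lemma linD x y : f (x + y) = f x + f y.
Proof. by have := f_lin 1 x y; rewrite !scale1r. Qed.

Lemma linZ (c : K) x : f (c *: x) = c *: f x.
Proof. by have := f_lin c x 0; rewrite !addr0 lin0 addr0. Qed.

Lemma linN x : f (- x) = - f x.
Proof. by rewrite -scaleN1r linZ scaleN1r. Qed.

Lemma linMn x n : f (x *+ n) = f x *+ n.
Proof. by elim: n => [|n IH]; rewrite ?mulr0n ?lin0 // !mulrS linD IH. Qed.

Lemma lin_sum (I : Type) (r : seq I) (g : I -> U) :
  f (\sum_(i <- r) g i) = \sum_(i <- r) f (g i).
Proof. exact: (big_morph f linD lin0). Qed.

Lemma lin_closed_preimage (P : V -> Prop) :
  lin_closed P -> lin_closed (fun x => P (f x)).
Proof.
case=> P0 PD PZ; split=> [|x y Px Py|c x Px]; first by rewrite lin0.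
  by rewrite linD; apply: PD.
by rewrite linZ; apply: PZ.
Qed.
End LinearMaps.

Section LinClosed.
Variables (K : fieldType) (M : lmodType K) (P : M -> Prop).
Hypothesis P_closed : lin_closed P.

Lemma lin_closedN x : P x -> P (- x).
Proof. by case: P_closed => _ _ PZ Px; rewrite -scaleN1r; apply: PZ. Qed.

Lemma lin_closed_sum (I : Type) (r : seq I) (f : I -> M) :
  (forall i, List.In i r -> P (f i)) -> P (\sum_(i <- r) f i).
Proof.
case: P_closed => P0 PD _; elim: r => [|i r IH] Pr; first by rewrite big_nil.
by rewrite big_cons; apply: PD; [apply: Pr; left | apply: IH => j rj; apply: Pr; right].
Qed.
End LinClosed.

Lemma lin_closed_eq0 (K : fieldType) (M : lmodType K) : lin_closed (fun v : M => v = 0).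
Proof. by split=> [|x y -> ->|c x ->]; rewrite ?addr0 ?scaler0. Qed.

Section Product.
Variables (K : fieldType) (M : lmodType K) (mul : M -> M -> M).
Local Notation "x ** y" := (mul x y) (at level 40, left associativity).
Local Notation Jac := (jacobian mul).

Section CentroidElement.
Variables (al : M -> M) (al_cen : in_centroid mul al).

Lemma centroid_prodl x y : al x ** y = al (x ** y).
Proof. by rewrite (al_cen.2 x y).2. Qed.

Lemma centroid_prodr x y : x ** al y = al (x ** y).
Proof. by rewrite (al_cen.2 x y).1. Qed.

Lemma centroid_jacobian w c d : Jac (al w) c d = al (Jac w c d).
Proof.
rewrite /jacobian !centroid_prodl !centroid_prodr centroid_prodl.
by rewrite !(linD al_cen.1).
Qed.

Lemma centroid_brace w c d : brace mul (al w) c d = al (brace mul w c d).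
Proof.
rewrite /brace !centroid_prodl.
by rewrite (linD al_cen.1) (linD al_cen.1) (linN al_cen.1) (linMn al_cen.1).
Qed.
End CentroidElement.

Lemma centroid_ext (f g : M -> M) :
  (forall x, f x = g x) -> in_centroid mul g -> in_centroid mul f.
Proof.
move=> efg [g_lin g_mul]; split=> [c x y|x y]; rewrite !efg; first exact: g_lin.
exact: g_mul.
Qed.

Hypothesis mul_bil : bilinear_prod mul.

Lemma prod_linl z : linear (mul^~ z).
Proof. by move=> c x y; apply: mul_bil.1. Qed.

Lemma prod_linr z : linear (mul z).
Proof. by move=> c x y; apply: mul_bil.2. Qed.

Lemma prodDr x y z : z ** (x + y) = z ** x + z ** y.
Proof. exact: (linD (prod_linr z) x y). Qed.

Lemma prod0l z : 0 ** z = 0. Proof. exact: (lin0 (prod_linl z)). Qed.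
Lemma prod0r z : z ** 0 = 0. Proof. exact: (lin0 (prod_linr z)). Qed.

Lemma prodZl c x z : (c *: x) ** z = c *: (x ** z).
Proof. exact: (linZ (prod_linl z) c x). Qed.

Lemma prodZr c x z : z ** (c *: x) = c *: (z ** x).
Proof. exact: (linZ (prod_linr z) c x). Qed.

Lemma prodNl x z : (- x) ** z = - (x ** z).
Proof. exact: (linN (prod_linl z) x). Qed.

Lemma jacobian_linl b d : linear (fun x => Jac x b d).
Proof.
move=> c x y; rewrite /jacobian !(prodZl, prodZr, linD (prod_linl _), prodDr).
by rewrite !scalerDr !addrA (ACl (1*3*5*2*4*6)%AC).
Qed.

Lemma brace_linl b d : linear (fun x => brace mul x b d).
Proof.
move=> c x y; rewrite /brace !(prodZl, prodZr, linD (prod_linl _), prodDr).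
by rewrite !scalerDr scalerN !mulr2n opprD !addrA (ACl (1*3*5*7*2*4*6*8)%AC).
Qed.

Lemma centroid_lincomb (I : Type) (r : seq I) (k : I -> K) (f : I -> M -> M) :
  (forall i, List.In i r -> in_centroid mul (f i)) ->
  in_centroid mul (fun x => \sum_(i <- r) k i *: f i x).
Proof.
elim: r => [|i r IH] cen_r.
  apply: (centroid_ext (g := fun _ => 0)) => [x|]; first by rewrite big_nil.
  split=> [c x y|x y]; first by rewrite scaler0 addr0.
  by rewrite prod0r prod0l.
apply: (centroid_ext (g := fun x => k i *: f i x + \sum_(j <- r) k j *: f j x)).
  by move=> x; rewrite big_cons.
have [fi_lin fi_mul] := cen_r i (or_introl erefl).
have [r_lin r_mul] := IH (fun j rj => cen_r j (or_intror rj)).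
split=> [c x y|x y].
  by rewrite fi_lin r_lin !scalerDr !scalerA mulrC !addrA (ACl (1*3*2*4)%AC).
have [fi1 fi2] := fi_mul x y; have [r1 r2] := r_mul x y.
rewrite prodDr (linD (prod_linl _)) prodZr prodZl.
by split; [rewrite fi1 r1 | rewrite fi2 r2].
Qed.

Hypothesis mul_anti : anticommutative mul.
Hypothesis char_neq2 : (2%:R : K) != 0.

Lemma prod_self x : x ** x = 0.
Proof.
have : 2%:R *: (x ** x) = 0 by rewrite scaler_nat mulr2n {1}mul_anti addNr.
by move/eqP; rewrite scaler_eq0 (negPf char_neq2) => /eqP.
Qed.

Lemma jacobian_cycle x y z : Jac x y z = Jac y z x.
Proof. by rewrite /jacobian -addrA addrC. Qed.

Lemma jacobian_swap x y z : Jac y x z = - Jac x y z.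
Proof.
rewrite /jacobian [y ** x]mul_anti [x ** z]mul_anti [z ** y]mul_anti.
by rewrite !prodNl !opprD (ACl (1*3*2)%AC).
Qed.

Lemma jacobian_self x z : Jac x x z = 0.
Proof. by rewrite /jacobian prod_self prod0l add0r [z ** x]mul_anti prodNl subrr. Qed.

Lemma jacobian_perm x y z : Jac x y z = 0 ->
  [/\ Jac y z x = 0, Jac z x y = 0, Jac y x z = 0, Jac x z y = 0 & Jac z y x = 0].
Proof.
move=> J0; have Jc : Jac y z x = 0 by rewrite -jacobian_cycle.
have Jcc : Jac z x y = 0 by rewrite -jacobian_cycle.
by split=> //; rewrite jacobian_swap ?J0 ?Jc ?Jcc oppr0.
Qed.

Section SL2.
Variables (E H F : M).
Hypotheses (hEH : E ** H = E) (hFH : F ** H = - F) (hEF : E ** F = 2%:R^-1 *: H).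
Local Notation L := (inL E H F).
Local Notation N := (NM mul E H F).
Local Notation J := (JM mul E H F).

Lemma inL_closed : lin_closed L.
Proof.
split.
- by exists 0, 0, 0; rewrite !scale0r !addr0.
- move=> _ _ [x1 [y1 [z1 ->]]] [x2 [y2 [z2 ->]]].
  exists (x1 + x2), (y1 + y2), (z1 + z2).
  by rewrite !scalerDl !addrA (ACl (1*4*2*5*3*6)%AC).
- move=> c _ [x [y [z ->]]].
  by exists (c * x), (c * y), (c * z); rewrite !scalerDr !scalerA.
Qed.

Lemma inL_ind (P : M -> Prop) : lin_closed P ->
  (forall e, e \in [:: E; H; F] -> P e) -> forall a, L a -> P a.
Proof.
move=> [_ PD PZ] Pbasis _ [x [y [z ->]]].
apply: (PD _ _ (PD _ _ (PZ _ _ _) (PZ _ _ _)) (PZ _ _ _)).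
all: by apply: Pbasis; rewrite !inE eqxx ?orbT.
Qed.

Lemma prod_inL a b : L a -> L b -> L (a ** b).
Proof.
have [L0 _ LZ] := inL_closed; have LN := lin_closedN inL_closed.
have LE : L E by exists 1, 0, 0; rewrite !scale0r !addr0 scale1r.
have LH : L H by exists 0, 1, 0; rewrite !scale0r addr0 add0r scale1r.
have LF : L F by exists 0, 0, 1; rewrite !scale0r !add0r scale1r.
move=> La Lb; move: a La.
apply: (inL_ind (lin_closed_preimage (prod_linl b) inL_closed)) => e1 he1.
move: b Lb; apply: (inL_ind (lin_closed_preimage (prod_linr e1) inL_closed)) => e2 he2.
move: he1 he2; rewrite !inE => /or3P[]/eqP-> /or3P[]/eqP->; rewrite ?prod_self //.
all: rewrite ?hEH ?hFH ?hEF ?[H ** E]mul_anti ?[H ** F]mul_anti ?[F ** E]mul_anti.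
all: by rewrite ?hEH ?hFH ?hEF ?opprK; auto.
Qed.

Lemma jacobian_EHF : Jac E H F = 0.
Proof.
rewrite /jacobian hEH [H ** F]mul_anti hFH opprK [F ** E]mul_anti hEF.
by rewrite prodNl prodZl prod_self scaler0 oppr0 addr0 subrr.
Qed.

(* L is a Lie algebra: by trilinearity it suffices to check the Jacobi
   identity on the basis, where it follows from jacobian_EHF and alternation. *)
Lemma jacobi_L a b c : L a -> L b -> L c -> Jac a b c = 0.
Proof.
have kerJ y z : lin_closed (fun x => Jac x y z = 0).
  exact: (lin_closed_preimage (jacobian_linl y z) (lin_closed_eq0 M)).
move=> La Lb Lc; move: a La; apply: (inL_ind (kerJ b c)) => e1 he1.
rewrite jacobian_cycle; move: b Lb; apply: (inL_ind (kerJ c e1)) => e2 he2.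
rewrite jacobian_cycle; move: c Lc; apply: (inL_ind (kerJ e1 e2)) => e3 he3.
have [J1 J2 J3 J4 J5] := jacobian_perm jacobian_EHF.
have self2 x z : Jac x z x = 0 by rewrite -jacobian_cycle jacobian_self.
have self3 x z : Jac z x x = 0 by rewrite jacobian_cycle jacobian_self.
move: he1 he2 he3; rewrite !inE => /or3P[]/eqP-> /or3P[]/eqP-> /or3P[]/eqP->.
all: first [exact: jacobian_self | exact: self2 | exact: self3
           | exact: jacobian_EHF | done].
Qed.

Lemma NM_closed : lin_closed N.
Proof.
split=> [a b _ _|x y Nx Ny a b La Lb|c x Nx a b La Lb].
- exact: (lin0 (jacobian_linl a b)).
- by rewrite (linD (jacobian_linl a b)) Nx ?Ny ?addr0.
- by rewrite (linZ (jacobian_linl a b)) Nx ?scaler0.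
Qed.

Lemma JM_closed : lin_closed J.
Proof.
split=> [a b _ _|x y Jx Jy a b La Lb|c x Jx a b La Lb].
- exact: (lin0 (brace_linl a b)).
- by rewrite (linD (brace_linl a b)) Jx ?Jy ?addr0.
- by rewrite (linZ (brace_linl a b)) Jx ?scaler0.
Qed.

Lemma L_sub_N a : L a -> N a.
Proof. by move=> La b c Lb Lc; apply: jacobi_L. Qed.

Lemma NM_centroid al v : in_centroid mul al -> N v -> N (al v).
Proof.
by move=> al_cen Nv a b La Lb; rewrite centroid_jacobian // Nv // (lin0 al_cen.1).
Qed.

Lemma JM_centroid al v : in_centroid mul al -> J v -> J (al v).
Proof.
by move=> al_cen Jv a b La Lb; rewrite centroid_brace // Jv // (lin0 al_cen.1).
Qed.

(* A module V_{2i} spanned by a pair u, v of elements of J_M is mapped into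
   J_M by L: the action of E, H, F sends u and v to 0, u, v, -u or -v. *)
Lemma V2_pair_Lmodule u v (c d : K) a : V2_pair mul E H F u v -> J u -> J v ->
  L a -> J (a ** (c *: u + d *: v)).
Proof.
move=> [uH [vH [uE [uF [vE vF]]]]] Ju Jv; move: a.
apply: (inL_ind (lin_closed_preimage (prod_linl _) JM_closed)) => e.
have [J0 JD JZ] := JM_closed; have JN := lin_closedN JM_closed.
rewrite prodDr !prodZr [e ** u]mul_anti [e ** v]mul_anti.
rewrite !inE => /or3P[]/eqP->; rewrite ?uH ?vH ?uE ?uF ?vE ?vF ?opprK ?oppr0.
all: by apply: JD; apply: JZ; auto.
Qed.

Lemma JM_Lmodule (J_V2 : forall j, J j -> exists s : seq ((K * K) * (M * M)),
    (forall q, List.In q s ->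
       [/\ V2_pair mul E H F q.2.1 q.2.2, J q.2.1 & J q.2.2]) /\
    j = \sum_(q <- s) (q.1.1 *: q.2.1 + q.1.2 *: q.2.2)) a y :
  L a -> J y -> J (a ** y).
Proof.
move=> La /J_V2 [s [s_V2 ->]]; rewrite (lin_sum (prod_linr a)).
apply: (lin_closed_sum JM_closed) => q /s_V2 [V2q Ju Jv].
exact: V2_pair_Lmodule.
Qed.

Section SumLU.
Hypothesis alpha_cen : forall m a b, L a -> L b -> in_centroid mul (alpha_op mul m a b).

Lemma U_centroid al : inU mul E H F al -> in_centroid mul al.
Proof.
move=> [s [sL al_eq]]; apply: (centroid_ext al_eq).
by apply: centroid_lincomb => q /sL [La Lb]; apply: alpha_cen.
Qed.

Lemma sum_L_U_ind (P : M -> Prop) : lin_closed P ->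
  (forall al a, in_centroid mul al -> L a -> P (al a)) ->
  forall x, in_sum_L_U mul E H F x -> P x.
Proof.
move=> P_closed P_gen x [s [sUL ->]]; apply: (lin_closed_sum P_closed).
by move=> q /sUL [Uq Lq]; apply: P_gen (U_centroid Uq) Lq.
Qed.
End SumLU.
End SL2.
End Product.

Theorem lemmal2 (K : fieldType) (M : lmodType K) (mul : M -> M -> M)
  (E H F : M)
  (hchar2 : (2%:R : K) != 0) (hchar3 : (3%:R : K) != 0)
  (hbil : bilinear_prod mul) (hanti : anticommutative mul)
  (hmalcev : malcev_identity mul) (hH : in_H_variety mul)
  (hL : is_sl2_copy mul E H F)
  (hfaith : forall m : M, m <> 0 -> exists a, inL E H F a /\ mul m a <> 0)
  (hdec : forall m : M, exists n j,
      NM mul E H F n /\ JM mul E H F j /\ m = n + j)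
  (hdir : forall m : M, NM mul E H F m -> JM mul E H F m -> m = 0)
  (hJ : forall j : M, JM mul E H F j ->
      exists s : seq ((K * K) * (M * M)),
        (forall q, List.In q s ->
           [/\ V2_pair mul E H F q.2.1 q.2.2,
               JM mul E H F q.2.1 & JM mul E H F q.2.2]) /\
        j = \sum_(q <- s) (q.1.1 *: q.2.1 + q.1.2 *: q.2.2))
  (hU : forall m a b, inL E H F a -> inL E H F b ->
      in_centroid mul (alpha_op mul m a b))
  (hN : forall n : M, NM mul E H F n <-> in_sum_L_U mul E H F n) :
  (forall x y, NM mul E H F x -> NM mul E H F y -> NM mul E H F (mul x y)) /\
  (forall x y, NM mul E H F x -> JM mul E H F y -> JM mul E H F (mul x y)).
Proof.
have [hEH [hFH [hEF _]]] := hL.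
have N_closed := NM_closed hbil E H F.
have sum_ind := sum_L_U_ind hbil hU.
split=> [x y /hN Ux Ny | x y /hN Ux Jy].
- (* α(a)·β(b) = α(β(ab)) with ab ∈ L ⊆ N_M, and N_M is Γ-stable. *)
  move: x Ux; apply: (sum_ind _ (lin_closed_preimage (prod_linl hbil y) N_closed)).
  move=> al a al_cen La; move/hN: Ny; move: y.
  apply: (sum_ind _ (lin_closed_preimage (prod_linr hbil (al a)) N_closed)).
  move=> be b be_cen Lb; rewrite centroid_prodl // centroid_prodr //.
  apply: NM_centroid al_cen (NM_centroid be_cen _).
  apply: (L_sub_N hbil hanti hchar2 hEH hFH hEF).
  exact: (prod_inL hbil hanti hchar2 hEH hFH hEF La Lb).
- (* α(a)·y = α(ay) with ay ∈ J_M, and J_M is Γ-stable. *)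
  move: x Ux; apply: (sum_ind _ (lin_closed_preimage (prod_linl hbil y) (JM_closed hbil E H F))).
  move=> al a al_cen La; rewrite centroid_prodl //.
  exact: JM_centroid al_cen (JM_Lmodule hbil hanti hJ La Jy).
Qed.
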